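(* The set $\{A(\mathbf j,r)\mid A\in\Xi^\pm(\infty),\ \mathbf j\in\mathbb N^\infty,\ \sigma(\mathbf j)+\sigma(A)\le r\}$ is a $\mathbb Q(v)$-basis of $\mathbf V(\infty,r)$.
   Context: $v$ indeterminate, $\mathcal Z=\mathbb Z[v,v^{-1}]$. Matrices are $\mathbb Z\times\mathbb Z$ of finite support; $\Xi(\infty,r)$: nonnegative integer matrices with entry sum $r$; $\Xi^\pm(\infty)$: nonnegative integer matrices with zero diagonal; $\sigma(A)$ the entry sum; $ro(A)$, $co(A)$ the row/column sum sequences. $\mathbb Z^\infty$, $\mathbb N^\infty$: finitely supported integer / nonnegative integer sequences indexed by $\mathbb Z$; $\sigma(\mathbf j)=\sum_ij_i$. $\mathcal K(\infty,r)$: for a finite field with $q$ elements and an $r$-dimensional space $V$, a $\mathbb Z$-step flag is $(V_i)_{i\in\mathbb Z}$, $V_i\subseteq V_{i+1}$, $V_i=0$ for $i\ll0$, $\bigcup V_i=V$; $GL(V)$-orbits $\mathcal O_A$ on pairs of flags correspond to $A\in\Xi(\infty,r)$ via $a_{ij}=\dim(V_{i-1}+V_i\cap V'_j)-\dim(V_{i-1}+V_i\cap V'_{j-1})$; for $(f_1,f_2)\in\mathcal O_C$ the number of $f$ with $(f_1,f)\in\mathcal O_A$, $(f,f_2)\in\mathcal O_B$ is $g_{A,B,C}|_{v^2=q}$ for some $g_{A,B,C}\in\mathbb Z[v^2]$. $\mathcal K(\infty,r)$ is the free $\mathcal Z$-module on $\{e_A\}_{A\in\Xi(\infty,r)}$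 with $e_Ae_B=\sum_Cg_{A,B,C}e_C$; $[A]=v^{-d_A}e_A$, $d_A=\sum_{i\ge k,j<l}a_{ij}a_{kl}$. $\widehat{\boldsymbol{\mathcal K}}(\infty,r)$ is the $\mathbb Q(v)$-algebra of formal sums $\sum_A\beta_A[A]$ such that for each $\lambda$ only finitely many $A$ with $\beta_A\ne0$ have $ro(A)=\lambda$ and only finitely many have $co(A)=\lambda$, with product extended bilinearly. For $A\in\Xi^\pm(\infty)$ and $\mathbf j\in\mathbb Z^\infty$, $A(\mathbf j,r)=\sum_{\lambda\in\mathbb N^\infty,\sigma(A)+\sigma(\lambda)=r}v^{\sum_i\lambda_ij_i}[A+\operatorname{diag}(\lambda)]$. $\mathbf V(\infty,r)$ is the $\mathbb Q(v)$-span of all $A(\mathbf j,r)$ with $A\in\Xi^\pm(\infty)$, $\mathbf j\in\mathbb Z^\infty$. *)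

From HB Require Import structures.
From mathcomp Require Import all_boot all_order all_algebra.
From mathcomp Require Import finmap fraction.
Set Implicit Arguments. Unset Strict Implicit. Unset Printing Implicit Defensive.
Import Order.TTheory GRing.Theory Num.Theory.
Local Open Scope fset_scope.
Local Open Scope ring_scope.

Definition Qv : fieldType := {fraction {poly rat}}.
Definition v : Qv := tofrac ('X : {poly rat}).

Definition mat := {fsfun int * int -> nat with 0%N}.
(* N^infty and Z^infty : finitely supported sequences indexed by Z. *)
Definition seqN := {fsfun int -> nat with 0%N}.
Definition seqZ := {fsfun int -> int with 0%Z}.

Definition sigma (A : mat) : nat := (\sum_(k <- finsupp A) A k)%N.
Definition sigmaN (l : seqN) : nat := (\sum_(i <- finsupp l) l i)%N.
Definition sigmaZ (j : seqZ) : int := \sum_(i <- finsupp j) j i.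

Definition Xipm (A : mat) : Prop := forall i : int, A (i, i) = 0%N.
(* j in N^infty, viewed inside Z^infty. *)
Definition nonneg_seq (j : seqZ) : Prop := forall i : int, (0 <= j i)%R.

Definition matD (A B : mat) : mat :=
  [fsfun k in finsupp A `|` finsupp B => (A k + B k)%N].
Definition diag (l : seqN) : mat :=
  [fsfun k in [fset (i, i) | i in finsupp l] => if k.1 == k.2 then l k.1 else 0%N].
Definition diag_of (M : mat) : seqN :=
  [fsfun i in [fset k.1 | k in finsupp M] => M (i, i)].

(* Elements of \hat K(infty, r) are formal sums  sum_M beta_M [M]; such a sum
   is represented by its coefficient function M |-> beta_M (vector space
   operations and equality are coefficientwise). *)
Definition fsum := mat -> Qv.

(* A(j, r) = sum_{lambda in N^infty, sigma(A)+sigma(lambda) = r}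
              v^(sum_i lambda_i j_i) [A + diag(lambda)].
   For A with zero diagonal, M = A + diag(lambda) forces lambda = diag_of M,
   so the coefficient of [M] is given as follows. *)
Definition Ajr (A : mat) (j : seqZ) (r : nat) : fsum := fun M =>
  let l := diag_of M in
  if (M == matD A (diag l)) && (sigma A + sigmaN l == r)%N
  then v ^ (\sum_(i <- finsupp l) (l i)%:Z * j i)
  else 0.

Definition in_V (r : nat) (x : fsum) : Prop :=
  exists s : seq (Qv * (mat * seqZ)),
    (forall p, p \in s -> Xipm p.2.1) /\
    forall M, x M = \sum_(p <- s) p.1 * Ajr p.2.1 p.2.2 r M.

Definition is_basis_of (I : eqType) (P : I -> Prop) (f : I -> fsum)
    (W : fsum -> Prop) : Prop :=
  [/\ (forall i, P i -> W (f i)),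
      (forall s : seq (Qv * I), uniq (map snd s) ->
         (forall p, p \in s -> P p.2) ->
         (forall M, \sum_(p <- s) p.1 * f p.2 M = 0) ->
         forall p, p \in s -> p.1 = 0)
    &
      (forall x, W x -> exists s : seq (Qv * I),
         (forall p, p \in s -> P p.2) /\
         forall M, x M = \sum_(p <- s) p.1 * f p.2 M)].

(* For A in Xi^pm(infty), the coefficient of [A + diag l] in A(j, r) is
   v^(l.j) when sigma(l) = r - sigma(A), and A(j, r) vanishes on every other
   matrix; so the statement reduces to: as functions of l with sigma(l) = n,
   the monomials v^(l.j) with j >= 0, sigma(j) <= n form a basis of the span
   of all v^(l.j), j in Z^infty.
   Spanning: as 0 <= l_i <= n, prod_(k <= n) (v^(l_i) - v^k) = 0, which
   trades a negative exponent j_i for the exponents j_i + t, 1 <= t <= n + 1;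
   for j >= 0 with sigma(j) > n, prod_i prod_(k < j_i) (v^(l_i) - v^k) = 0 since
   l >= j is impossible, and its expansion writes v^(l.j) through monomials
   of smaller mass.
   Independence: a relation holding for sigma(l) = n holds for sigma(l) <= n;
   applying the operators f |-> f(. + e_i) - v^k f for the factors of a j of
   maximal mass and evaluating at l = 0 kills every other monomial and leaves
   the coefficient of j times a nonzero product. *)

From mathcomp Require Import all_boot all_order all_algebra.
From mathcomp Require Import finmap fraction zify ring.
From Stdlib Require Import Classical.
Set Implicit Arguments. Unset Strict Implicit. Unset Printing Implicit Defensive.
Import Order.TTheory GRing.Theory Num.Theory.
Local Open Scope fset_scope.
Local Open Scope ring_scope.

Lemma matDE (A B : mat) k : matD A B k = (A k + B k)%N.
Proof.
rewrite /matD fsfunE; case: ifP => //; rewrite !inE => /norP[].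
by rewrite !memNfinsupp => /eqP -> /eqP ->.
Qed.

Lemma diagE (l : seqN) a b : diag l (a, b) = if a == b then l a else 0%N.
Proof.
rewrite /diag fsfunE; case: ifP => //= Hin; case: ifP => [/eqP Eab|//]; subst b.
rewrite fsfun_dflt //; apply/negP => Ha.
by move/negP: Hin; apply; apply/imfsetP; exists a.
Qed.

Lemma diag_ofE (M : mat) i : diag_of M i = M (i, i).
Proof.
rewrite /diag_of fsfunE; case: ifP => // Hin.
rewrite fsfun_dflt //; apply/negP => Ha.
by move/negP: Hin; apply; apply/imfsetP; exists (i, i).
Qed.

Lemma v_neq0 : v != 0.
Proof. by rewrite /v tofrac_eq0 polyX_eq0. Qed.

Lemma expv_inj : injective (GRing.exp v).
Proof.
move=> a b; rewrite /v -!tofracXn => /eqP; rewrite tofrac_eq => /eqP E.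
have : size ('X^a : {poly rat}) = size ('X^b : {poly rat}) by rewrite E.
by rewrite !size_polyXn => -[].
Qed.

Lemma big_finsupp_incl (T : eqType) (d : T) (R : nmodType)
    (f : {fsfun int -> T with d}) (S : {fset int}) (F : int -> T -> R) :
  finsupp f `<=` S -> (forall i, F i d = 0) ->
  \sum_(i <- finsupp f) F i (f i) = \sum_(i <- S) F i (f i).
Proof.
by move=> sub F0; apply: big_fset_incl => // i _ iN; rewrite fsfun_dflt ?F0.
Qed.

Lemma sum_finsupp_incl (R : nmodType) (f : {fsfun int -> R with 0}) (S : {fset int}) :
  finsupp f `<=` S -> \sum_(i <- finsupp f) f i = \sum_(i <- S) f i.
Proof. by move=> sub; apply: (big_finsupp_incl (F := fun _ x => x)). Qed.

Lemma sum_delta (R : nmodType) (S : {fset int}) i (F : int -> R) :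
  i \in S -> \sum_(k <- S) F k *+ (k == i) = F i.
Proof.
move=> iS; rewrite (big_fsetD1 i) //= eqxx mulr1n big1_fset ?addr0 // => k.
by rewrite !inE => /andP[/negPf -> _] _; rewrite mulr0n.
Qed.

Definition add_at (R : nmodType) (f : {fsfun int -> R with 0}) (i : int) (t : R) :
  {fsfun int -> R with 0} := [fsfun f with i |-> f i + t].

Section AddAt.
Variables (R : nmodType) (f : {fsfun int -> R with 0}) (i : int) (t : R).

Lemma add_atE k : add_at f i t k = f k + t *+ (k == i).
Proof. by rewrite fsfun_withE; case: eqP => [->|]; rewrite ?addr0. Qed.

Lemma finsupp_add_at : finsupp (add_at f i t) `<=` i |` finsupp f.
Proof.
rewrite /add_at finsupp_with; case: ifP => _; last exact: fsubset_refl.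
by apply: fsubset_trans (fsubsetDl _ _) (fsubsetUr _ _).
Qed.

Lemma sum_add_at :
  \sum_(k <- finsupp (add_at f i t)) add_at f i t k = \sum_(k <- finsupp f) f k + t.
Proof.
rewrite (sum_finsupp_incl finsupp_add_at).
rewrite (@sum_finsupp_incl _ f (i |` finsupp f)) ?fsubsetUr //.
under eq_bigr => k _ do rewrite add_atE.
by rewrite big_split /= sum_delta // !inE eqxx.
Qed.

Lemma add_at0 : add_at f i 0 = f.
Proof. by rewrite /add_at addr0 fsfun_with_id. Qed.

End AddAt.

Lemma sigmaZ_add_at (j : seqZ) i t : sigmaZ (add_at j i t) = sigmaZ j + t.
Proof. exact: sum_add_at. Qed.

Lemma sigmaN_add_at (l : seqN) i t : sigmaN (add_at l i t) = (sigmaN l + t)%N.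
Proof. exact: sum_add_at. Qed.

Lemma sigmaZ_ge0 j : nonneg_seq j -> 0 <= sigmaZ j.
Proof. by move=> hj; apply: sumr_ge0 => i _; exact: hj. Qed.

Lemma sigmaZ_le_sigmaN (x : seqZ) (l : seqN) :
  (forall i, x i <= (l i)%:Z) -> sigmaZ x <= (sigmaN l)%:Z.
Proof.
move=> le_xl; set S := finsupp x `|` finsupp l.
rewrite [sigmaZ x](@sum_finsupp_incl _ x S) ?fsubsetUl //.
rewrite [sigmaN l](@sum_finsupp_incl _ l S) ?fsubsetUr //.
by rewrite (big_morph Posz PoszD (erefl _)); exact: ler_sum.
Qed.

Definition dot (l : seqN) (j : seqZ) : int := \sum_(i <- finsupp l) (l i)%:Z * j i.

Definition mon (j : seqZ) (l : seqN) : Qv := v ^ dot l j.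

Lemma dotE l j (S : {fset int}) : finsupp l `<=` S ->
  dot l j = \sum_(i <- S) (l i)%:Z * j i.
Proof.
by move=> sub; apply: (big_finsupp_incl (F := fun i x => x%:Z * j i)) => // i; rewrite mul0r.
Qed.

Lemma mon_add_atN j l i t : mon j (add_at l i t) = v ^ (t%:Z * j i) * mon j l.
Proof.
rewrite /mon -expfzDr ?v_neq0 //; congr (v ^ _).
rewrite (@dotE _ _ (i |` finsupp l)) ?finsupp_add_at //.
rewrite (@dotE l _ (i |` finsupp l)) ?fsubsetUr //.
rewrite (eq_bigr (fun k => (l k)%:Z * j k + (t%:Z * j k) *+ (k == i))); last first.
  move=> k _; rewrite add_atE PoszD mulrDl.
  by case: (k == i); rewrite ?mulr1n ?mulr0n ?mul0r ?addr0.
by rewrite big_split /= sum_delta ?inE ?eqxx // addrC.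
Qed.

Lemma mon_add_atZ j l i t : mon (add_at j i t) l = v ^ ((l i)%:Z * t) * mon j l.
Proof.
rewrite /mon -expfzDr ?v_neq0 //; congr (v ^ _).
rewrite (@dotE _ _ (i |` finsupp l)) ?fsubsetUr //.
rewrite (@dotE l j (i |` finsupp l)) ?fsubsetUr //.
rewrite (eq_bigr (fun k => (l k)%:Z * j k + ((l k)%:Z * t) *+ (k == i))); last first.
  by move=> k _; rewrite add_atE mulrDr mulrnAr.
by rewrite big_split /= sum_delta ?inE ?eqxx // addrC.
Qed.

Lemma mon0 j : mon j [fsfun] = 1.
Proof. by rewrite /mon /dot finsupp0 big_nil expr0z. Qed.

Definition spanned (n : nat) (P : seqZ -> Prop) (F : seqN -> Qv) : Prop :=
  exists s : seq (Qv * seqZ), (forall p, p \in s -> P p.2) /\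
    forall l, sigmaN l = n -> F l = \sum_(p <- s) p.1 * mon p.2 l.

Section Spanned.
Variables (n : nat) (P : seqZ -> Prop).

Lemma spanned_mon j : P j -> spanned n P (mon j).
Proof.
move=> Pj; exists [:: (1, j)]; split; first by move=> p; rewrite inE => /eqP ->.
by move=> l _; rewrite big_seq1 mul1r.
Qed.

Lemma spanned_eq F G :
  (forall l, sigmaN l = n -> F l = G l) -> spanned n P F -> spanned n P G.
Proof. by move=> FG [s [Ps E]]; exists s; split => // l Hl; rewrite -FG // E. Qed.

Lemma spanned0 : spanned n P (fun _ => 0).
Proof. by exists [::]; split => // l _; rewrite big_nil. Qed.

Lemma spannedD F G :
  spanned n P F -> spanned n P G -> spanned n P (fun l => F l + G l).
Proof.
move=> [s1 [P1 E1]] [s2 [P2 E2]]; exists (s1 ++ s2); split.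
  by move=> p; rewrite mem_cat => /orP[/P1|/P2].
by move=> l Hl; rewrite big_cat /= E1 // E2.
Qed.

Lemma spannedZ c F : spanned n P F -> spanned n P (fun l => c * F l).
Proof.
move=> [s [Ps E]]; exists [seq (c * p.1, p.2) | p <- s]; split.
  by move=> p /mapP [q qs ->]; exact: (Ps q qs).
by move=> l Hl; rewrite E // big_map mulr_sumr; apply: eq_bigr => p _; rewrite mulrA.
Qed.

Lemma spanned_trans (Q : seqZ -> Prop) F :
  spanned n Q F -> (forall j, Q j -> spanned n P (mon j)) -> spanned n P F.
Proof.
move=> [s [Qs E]] QP; apply: spanned_eq (fun l Hl => esym (E l Hl)) _.
elim: s Qs {E} => [|p s IH] Qs; first by apply: spanned_eq spanned0 => l _; rewrite big_nil.
apply: spanned_eq (spannedD (spannedZ p.1 (QP _ (Qs _ (mem_head _ _)))) (IH _)).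
  by move=> l _; rewrite big_cons.
by move=> q qs; apply: Qs; rewrite inE qs orbT.
Qed.

End Spanned.

Definition small (n : nat) (j : seqZ) : Prop := nonneg_seq j /\ sigmaZ j <= n%:Z.

Lemma not_le_exists_lt (x y : int -> int) :
  ~ (forall i, x i <= y i) -> exists i, y i < x i.
Proof.
move=> not_le; apply: NNPP => no_lt; apply: not_le => i.
by rewrite leNgt; apply/negP => lt_yx; apply: no_lt; exists i.
Qed.

(* For x >= 0, factor_prod (factors x) l = prod_i prod_(k < x_i) (v^(l_i) - v^k)
   vanishes unless l >= x, and its leading monomial is mon x. *)
Definition factors (x : seqZ) : seq (int * nat) :=
  [seq (i, k) | i <- finsupp x, k <- iota 0 (absz (x i))].

Definition shift (b : seqZ) (fs : seq (int * nat)) : seqZ :=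
  foldr (fun q y => add_at y q.1 1) b fs.

Definition factor_prod (fs : seq (int * nat)) (y : int -> int) : Qv :=
  \prod_(q <- fs) (v ^ y q.1 - v ^+ q.2).

Lemma shiftE b fs k : shift b fs k = b k + (count (fun q => q.1 == k) fs)%:Z.
Proof.
elim: fs => [|q fs IH] /=; first by rewrite addr0.
by rewrite add_atE IH eq_sym; case: (q.1 == k) => /=; lia.
Qed.

Lemma count_factors x k : count (fun q => q.1 == k) (factors x) = absz (x k).
Proof.
rewrite count_flatten -map_comp sumnE big_map /=.
under eq_bigr => i _ do rewrite count_map /= (eq_count (a2 := fun=> i == k)) //.
case: (boolP (k \in finsupp x)) => kx.
  rewrite (big_fsetD1 k) //= eqxx count_predT size_iota big1_fset ?addn0 //.
  by move=> i; rewrite !inE => /andP[/negPf -> _] _; rewrite count_pred0.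
rewrite fsfun_dflt // big1_fset // => i ix _.
have /negPf -> : i != k by apply: contraNneq kx => <-.
by elim: (iota _ _).
Qed.

Lemma shift_factors x : nonneg_seq x -> shift [fsfun] (factors x) = x.
Proof.
move=> hx; apply/fsfunP => k.
by rewrite shiftE fsfunE add0r count_factors gez0_abs.
Qed.

Lemma sigmaZ_shift b fs : sigmaZ (shift b fs) = sigmaZ b + (size fs)%:Z.
Proof.
elim: fs => [|q fs IH] /=; first by rewrite addr0.
by rewrite sigmaZ_add_at IH -addrA -[(size fs).+1]addn1 PoszD.
Qed.

Lemma factor_prod_expand (fs : seq (int * nat)) (b : seqZ) : exists s : seq (Qv * seqZ),
  (forall p, p \in s -> (forall i, b i <= p.2 i) /\ sigmaZ p.2 < sigmaZ (shift b fs)) /\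
  forall l : seqN, factor_prod fs (fun i => (l i)%:Z) * mon b l =
            mon (shift b fs) l + \sum_(p <- s) p.1 * mon p.2 l.
Proof.
elim: fs => [|[i k] fs [s [Ps E]]].
  by exists [::]; split => // l; rewrite /factor_prod !big_nil mul1r addr0.
set y := shift b fs.
have mon_add_at1 j l : mon (add_at j i 1) l = v ^+ l i * mon j l by rewrite mon_add_atZ mulr1.
exists ((- v ^+ k, y) :: [seq (p.1, add_at p.2 i 1) | p <- s] ++
        [seq (- v ^+ k * p.1, p.2) | p <- s]); split.
  move=> p; rewrite inE mem_cat => /orP[/eqP -> /=|/orP[/mapP[q qs ->]|/mapP[q qs ->]]] /=.
  - split; last by rewrite sigmaZ_add_at ltrDl.
    by move=> j; rewrite /y shiftE lerDl.
  - have [le_bq lt_q] := Ps q qs; split; last by rewrite !sigmaZ_add_at ltrD2r.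
    by move=> j; apply: (le_trans (le_bq j)); rewrite add_atE lerDl.
  - have [le_bq lt_q] := Ps q qs; split => //.
    by rewrite sigmaZ_add_at (lt_le_trans lt_q) // lerDl.
move=> l; rewrite /factor_prod big_cons /= -mulrA -/(factor_prod _ _) E.
rewrite big_cons big_cat !big_map /= mon_add_at1.
rewrite [X in _ = _ + (_ + (X + _))](eq_bigr (fun p => v ^+ l i * (p.1 * mon p.2 l)));
  last by move=> p _; rewrite mon_add_at1 mulrCA.
rewrite [X in _ = _ + (_ + (_ + X))](eq_bigr (fun p => - v ^+ k * (p.1 * mon p.2 l)));
  last by move=> p _; rewrite mulrA.
by rewrite -!mulr_sumr /y mulrBl !mulrDr !mulNr opprD addrACA !addrA.
Qed.

Lemma mem_factors x i k : (i, k) \in factors x = (i \in finsupp x) && (k < absz (x i))%N.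
Proof.
apply/allpairsPdep/andP => [[i' [k' [ix kx [-> ->]]]]|[ix kx]].
  by rewrite mem_iota in kx.
by exists i, k; rewrite mem_iota.
Qed.

Lemma factor_prod_eq0 (x : seqZ) (y : int -> int) :
  (forall i, 0 <= y i) -> (exists i, y i < x i) -> factor_prod (factors x) y = 0.
Proof.
move=> y_ge0 [i lt_yx]; apply/eqP; rewrite prodf_seq_eq0; apply/hasP.
exists (i, absz (y i)); last by rewrite /= -{1}(gez0_abs (y_ge0 i)) subrr.
rewrite mem_factors mem_finsupp; have := y_ge0 i.
by case: (x i =P 0) => [x0|_ le0y] /=; lia.
Qed.

Lemma factor_prod_neq0 x : nonneg_seq x -> factor_prod (factors x) x != 0.
Proof.
move=> hx; rewrite prodf_seq_neq0; apply/allP => -[i k]; rewrite mem_factors.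
case/andP=> _ lt_kx; rewrite /= subr_eq0 -(gez0_abs (hx i)).
by apply: contraTneq lt_kx => /expv_inj ->; rewrite ltnn.
Qed.

Lemma spanned_mon_gt n x : nonneg_seq x -> n%:Z < sigmaZ x ->
  spanned n (fun y => nonneg_seq y /\ sigmaZ y < sigmaZ x) (mon x).
Proof.
move=> hx lt_nx; have [s [Ps E]] := factor_prod_expand (factors x) [fsfun].
rewrite shift_factors // in Ps E.
exists [seq (- p.1, p.2) | p <- s]; split.
  move=> p /mapP[q qs ->] /=; have [ge0_q lt_q] := Ps q qs; split => // i.
  by have := ge0_q i; rewrite fsfunE.
move=> l sl; have := E l; rewrite factor_prod_eq0 // ?mul0r.
  move/eqP; rewrite eq_sym addr_eq0 => /eqP ->.
  by rewrite big_map -sumrN; apply: eq_bigr => p _; rewrite mulNr.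
apply: not_le_exists_lt => le_xl.
by have := sigmaZ_le_sigmaN le_xl; rewrite sl; lia.
Qed.

Lemma spanned_mon_nonneg n x : nonneg_seq x -> spanned n (small n) (mon x).
Proof.
have [m] := ubnP (absz (sigmaZ x)); elim: m x => // m IH x lt_xm hx.
case: (lerP (sigmaZ x) n%:Z) => [le_xn|lt_nx]; first exact: spanned_mon.
apply: spanned_trans (spanned_mon_gt hx lt_nx) _ => y [hy lt_yx].
by apply: IH => //; have := sigmaZ_ge0 hy; lia.
Qed.

Definition powers_poly (n : nat) : {poly Qv} :=
  \prod_(k <- iota 0 n.+1) ('X - (v ^+ k)%:P).

Lemma size_powers_poly n : size (powers_poly n) = n.+2.
Proof. by rewrite size_prod_XsubC size_iota. Qed.

Lemma root_powers_poly n m : (m <= n)%N -> (powers_poly n).[v ^+ m] = 0.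
Proof.
move=> le_mn; rewrite horner_prod; apply/eqP; rewrite prodf_seq_eq0; apply/hasP.
by exists m; rewrite ?mem_iota /= ?hornerXsubC ?subrr //; lia.
Qed.

Lemma powers_poly_coef0 n : (powers_poly n)`_0 != 0.
Proof.
rewrite -horner_coef0 horner_prod prodf_seq_neq0; apply/allP => k _ /=.
by rewrite hornerXsubC sub0r oppr_eq0 expf_neq0 // v_neq0.
Qed.

Lemma le_sigmaN (l : seqN) i : (l i <= sigmaN l)%N.
Proof.
case: (boolP (i \in finsupp l)) => il; last by rewrite fsfun_dflt.
by rewrite /sigmaN (big_fsetD1 i) //= leq_addr.
Qed.

(* v ^+ l i is a root of powers_poly n because l i <= sigmaN l = n. *)
Lemma mon_add_at_relation n (x : seqZ) (l : seqN) i : sigmaN l = n ->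
  \sum_(t < n.+2) (powers_poly n)`_t * mon (add_at x i t%:Z) l = 0.
Proof.
move=> sl; rewrite -(size_powers_poly n).
have mon_add_atn t : mon (add_at x i t%:Z) l = (v ^+ l i) ^+ t * mon x l.
  by rewrite mon_add_atZ -PoszM -exprM.
under eq_bigr => t _ do rewrite mon_add_atn mulrA.
by rewrite -mulr_suml -horner_coef root_powers_poly ?mul0r // -sl le_sigmaN.
Qed.

Definition neg_weight (x : seqZ) : int := \sum_(k <- finsupp x) ((absz (x k))%:Z - x k).

Lemma neg_weight_ge0 (x : seqZ) : 0 <= neg_weight x.
Proof. by apply: sumr_ge0 => k _; lia. Qed.

Lemma neg_weight_add_at (x : seqZ) (i t : int) :
  x i < 0 -> 0 < t -> neg_weight (add_at x i t) < neg_weight x.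
Proof.
move=> xi_lt0 t_gt0.
have ix : i \in finsupp x by rewrite mem_finsupp; apply/eqP => /= xi0; rewrite xi0 in xi_lt0.
have sub : finsupp (add_at x i t) `<=` finsupp x.
  by apply: fsubset_trans (finsupp_add_at _ _ _) _; rewrite fsubUset fsub1set ix fsubset_refl.
rewrite /neg_weight (big_finsupp_incl (F := fun _ y => (absz y)%:Z - y) sub) ?subrr //.
have lt_i : (absz (x i + t))%:Z - (x i + t) < (absz (x i))%:Z - x i by lia.
rewrite !(big_fsetD1 i ix) /= add_atE eqxx mulr1n ltr_leD //.
rewrite big_seq_cond [leRHS]big_seq_cond; apply: ler_sum => k.
by rewrite !inE andbT => /andP[/negPf ki _]; rewrite add_atE ki mulr0n addr0.
Qed.

Lemma spanned_mon_neg n (x : seqZ) i : x i < 0 ->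
  spanned n (fun y => neg_weight y < neg_weight x) (mon x).
Proof.
move=> xi_lt0; pose c := (powers_poly n)`_0.
exists [seq (- c^-1 * (powers_poly n)`_t.+1, add_at x i t.+1%:Z) | t <- iota 0 n.+1].
split; first by move=> p /mapP[t _ ->] /=; apply: neg_weight_add_at.
move=> l sl; have rel := mon_add_at_relation x i sl.
rewrite big_ord_recl /= add_at0 -/c in rel; move/eqP: rel; rewrite addrC addr_eq0 => /eqP rel.
rewrite big_map -[iota 0 n.+1]/(index_iota 0 n.+1) big_mkord.
under eq_bigr => t _ do rewrite -mulrA.
by rewrite -mulr_sumr rel mulrN mulNr opprK mulrA mulVf ?powers_poly_coef0 ?mul1r.
Qed.

Lemma spanned_mon_small n (x : seqZ) : spanned n (small n) (mon x).
Proof.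
have [m] := ubnP (absz (neg_weight x)); elim: m x => // m IH x lt_xm.
case: (boolP (has (fun k => x k < 0) (finsupp x))) => [/hasP[i _ xi_lt0]|no_neg].
  apply: spanned_trans (spanned_mon_neg n xi_lt0) _ => y lt_yx.
  by apply: IH; have := neg_weight_ge0 y; lia.
apply: spanned_mon_nonneg => k; case: (boolP (k \in finsupp x)) => kx.
  by move/hasPn: no_neg => /(_ k kx); rewrite -leNgt.
by rewrite fsfun_dflt.
Qed.

Lemma uniq_map_inj_in (T U : eqType) (f : T -> U) (s : seq T) :
  uniq (map f s) -> {in s &, injective f}.
Proof.
elim: s => [|a s IH] //= /andP[fa_s uniq_fs] x y; rewrite !inE.
move=> /orP[/eqP ->|xs] /orP[/eqP ->|ys] E //.
- by move: fa_s; rewrite E (map_f f ys).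
- by move: fa_s; rewrite -E (map_f f xs).
- exact: IH.
Qed.

Lemma fresh_point (s : seq seqZ) : exists z : int, forall j, j \in s -> j z = 0.
Proof.
exists (Posz (\max_(j <- s) \max_(k <- finsupp j) absz k).+1) => j js.
apply: fsfun_dflt; apply/negP => zj.
have := leq_trans (@leq_bigmax_seq _ _ xpredT (fun k : int => absz k) _ zj isT)
  (@leq_bigmax_seq _ _ xpredT (fun j : seqZ => \max_(k <- finsupp j) absz k) _ js isT).
by rewrite ltnn.
Qed.

Lemma seqZ_le_eq (x y : seqZ) :
  (forall i, x i <= y i) -> sigmaZ y <= sigmaZ x -> x = y.
Proof.
move=> le_xy le_s; set S := finsupp x `|` finsupp y.
have sum0 : \sum_(i <- S) (y i - x i) = 0.
  apply/eqP; rewrite eq_le sumr_ge0 ?andbT => [|i _]; last by rewrite subr_ge0.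
  rewrite sumrB -(@sum_finsupp_incl _ y S) ?fsubsetUr //.
  by rewrite -(@sum_finsupp_incl _ x S) ?fsubsetUl // subr_le0.
apply/fsfunP => k; case: (boolP (k \in S)) => kS.
  move/eqP: sum0; rewrite psumr_eq0 => [/allP /(_ k kS) /=|i _]; last by rewrite subr_ge0.
  by rewrite subr_eq0 => /eqP.
by rewrite !fsfun_dflt //; apply: contra kS; rewrite !inE => ->; rewrite ?orbT.
Qed.

Lemma sigmaN0 : sigmaN [fsfun] = 0%N.
Proof. by rewrite /sigmaN finsupp0 big_nil. Qed.

Lemma size_factors x : nonneg_seq x -> (size (factors x))%:Z = sigmaZ x.
Proof.
move=> hx; rewrite -{2}(shift_factors hx) sigmaZ_shift.
by rewrite /sigmaZ finsupp0 big_nil add0r.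
Qed.

Section MonomialsFree.
Variables (n : nat) (s : seq (Qv * seqZ)).
Hypotheses (uniq_s : uniq (map snd s)) (small_s : forall p, p \in s -> small n p.2)
  (rel_s : forall l, sigmaN l = n -> \sum_(p <- s) p.1 * mon p.2 l = 0).

(* Pad l up to mass n at a point outside every support. *)
Lemma rel_sigmaN_le l : (sigmaN l <= n)%N -> \sum_(p <- s) p.1 * mon p.2 l = 0.
Proof.
move=> le_ln; have [z z_fresh] := fresh_point (map snd s).
rewrite -[RHS](rel_s (l := add_at l z (n - sigmaN l)%N)); last first.
  by rewrite sigmaN_add_at; lia.
apply: eq_big_seq => p ps.
by rewrite mon_add_atN z_fresh ?(map_f snd ps) // mulr0 expr0z mul1r.
Qed.

Definition diff_sum (fs : seq (int * nat)) (mu : seqN) : Qv :=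
  \sum_(p <- s) p.1 * factor_prod fs p.2 * mon p.2 mu.

Lemma diff_sum_cons i k fs mu :
  diff_sum ((i, k) :: fs) mu = diff_sum fs (add_at mu i 1) - v ^+ k * diff_sum fs mu.
Proof.
rewrite /diff_sum mulr_sumr -sumrB; apply: eq_bigr => p _.
rewrite /factor_prod big_cons mon_add_atN mul1r /=.
by move: (p.1) (\prod_(q <- fs) _) (v ^ p.2 i) (v ^+ k) (mon p.2 mu) => a b c d e; ring.
Qed.

Lemma diff_sum_eq0 fs mu : (sigmaN mu + size fs <= n)%N -> diff_sum fs mu = 0.
Proof.
elim: fs mu => [|[i k] fs IH] mu le_n.
  rewrite /diff_sum -[RHS](@rel_sigmaN_le mu); last by rewrite addn0 in le_n.
  by apply: eq_bigr => p _; rewrite /factor_prod big_nil mulr1.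
by rewrite diff_sum_cons !IH ?mulr0 ?subr0 //; rewrite ?sigmaN_add_at /= in le_n *; lia.
Qed.

Lemma maximal_coef_eq0 p0 : p0 \in s ->
  (forall p, p \in s -> sigmaZ p0.2 < sigmaZ p.2 -> p.1 = 0) -> p0.1 = 0.
Proof.
move=> p0s top; have [hx0 le_x0n] := small_s p0s.
have le_n : (sigmaN [fsfun] + size (factors p0.2) <= n)%N.
  by rewrite sigmaN0; have := size_factors hx0; lia.
move: (diff_sum_eq0 le_n).
rewrite /diff_sum (bigD1_seq p0) //= ?(map_uniq uniq_s) // mon0 mulr1.
rewrite big1_seq ?addr0 => [/eqP|p /andP[p_neq0 ps]].
  by rewrite mulf_eq0 (negPf (factor_prod_neq0 hx0)) orbF => /eqP.
case: (ltrP (sigmaZ p0.2) (sigmaZ p.2)) => [lt_p|le_p]; first by rewrite top ?mul0r.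
have [hx _] := small_s ps.
rewrite factor_prod_eq0 ?mulr0 ?mul0r //; apply: not_le_exists_lt => le_p0p.
move: p_neq0; rewrite (uniq_map_inj_in uniq_s ps p0s) ?eqxx //.
exact/esym/seqZ_le_eq.
Qed.

Lemma monomials_free p : p \in s -> p.1 = 0.
Proof.
have [m] := ubnP (absz (n%:Z + 1 - sigmaZ p.2)%R); elim: m p => // m IH p lt_m ps.
apply: maximal_coef_eq0 => // q qs lt_pq; apply: (IH q _ qs).
have [hp le_pn] := small_s ps; have [_ le_qn] := small_s qs.
have := sigmaZ_ge0 hp; lia.
Qed.

End MonomialsFree.

Definition basis_index (r : nat) (Aj : mat * seqZ) : Prop :=
  [/\ Xipm Aj.1, nonneg_seq Aj.2 & sigmaZ Aj.2 + (sigma Aj.1)%:Z <= r%:Z].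

Lemma basis_indexP r A j : Xipm A -> (sigma A <= r)%N ->
  basis_index r (A, j) <-> small (r - sigma A) j.
Proof.
move=> hA le_Ar; split => [[_ /= hj le_r]|[hj le_r]]; split => //=; lia.
Qed.

Lemma basis_index_le r A j : basis_index r (A, j) -> (sigma A <= r)%N.
Proof. by case=> /= _ /sigmaZ_ge0; lia. Qed.

Lemma AjrE A j r M : Ajr A j r M =
  if (M == matD A (diag (diag_of M))) && (sigma A + sigmaN (diag_of M) == r)%N
  then mon j (diag_of M) else 0.
Proof. by []. Qed.

Lemma Ajr_eq0 A j r M : (r < sigma A)%N -> Ajr A j r M = 0.
Proof. by move=> lt_rA; rewrite AjrE; case: ifP => // /andP[_ /eqP]; lia. Qed.

Lemma Ajr_lin A j r (s : seq (Qv * seqZ)) :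
  (forall l, sigmaN l = (r - sigma A)%N -> mon j l = \sum_(p <- s) p.1 * mon p.2 l) ->
  forall M, Ajr A j r M = \sum_(p <- s) p.1 * Ajr A p.2 r M.
Proof.
move=> E M; rewrite AjrE; under eq_bigr => p _ do rewrite AjrE.
case: ifP => [/andP[_ /eqP sM]|_]; last by rewrite big1 // => p _; rewrite mulr0.
by rewrite E //; lia.
Qed.

Lemma Ajr_matD_diag A0 A j r l : Xipm A0 -> Xipm A -> sigmaN l = (r - sigma A0)%N ->
  (sigma A0 <= r)%N -> Ajr A j r (matD A0 (diag l)) = if A == A0 then mon j l else 0.
Proof.
move=> hA0 hA sl le_A0r.
have dl : diag_of (matD A0 (diag l)) = l.
  by apply/fsfunP => k; rewrite diag_ofE matDE diagE eqxx hA0.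
rewrite AjrE dl; have [->|neq_AA0] := eqVneq A A0.
  by rewrite eqxx /= sl ifT //; apply/eqP; lia.
case: ifP => // /andP[/eqP E _]; case/eqP: neq_AA0; apply/fsfunP => k.
by have := congr1 (fun M : mat => M k) E; rewrite !matDE /=; lia.
Qed.

Lemma Ajr_in_V r Aj : basis_index r Aj -> in_V r (Ajr Aj.1 Aj.2 r).
Proof.
case=> hA _ _; exists [:: (1, Aj)]; split; first by move=> p; rewrite inE => /eqP ->.
by move=> M; rewrite big_seq1 mul1r.
Qed.

Lemma in_V_spanned r x : in_V r x -> exists s : seq (Qv * (mat * seqZ)),
  (forall p, p \in s -> basis_index r p.2) /\
  forall M, x M = \sum_(p <- s) p.1 * Ajr p.2.1 p.2.2 r M.
Proof.
case=> s [Xs E]; suff [s' [Ps' E']] : exists s' : seq (Qv * (mat * seqZ)),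
    (forall p, p \in s' -> basis_index r p.2) /\
    forall M, \sum_(p <- s) p.1 * Ajr p.2.1 p.2.2 r M =
              \sum_(p <- s') p.1 * Ajr p.2.1 p.2.2 r M.
  by exists s'; split => // M; rewrite E E'.
elim: s Xs {E} => [|[c [A j]] s IH] Xs; first by exists [::].
have [p ps|s' [Ps' E']] := IH; first by apply: Xs; rewrite inE ps orbT.
have hA : Xipm A := Xs _ (mem_head _ _).
case: (leqP (sigma A) r) => [le_Ar|lt_rA]; last first.
  by exists s'; split => // M; rewrite big_cons /= Ajr_eq0 // mulr0 add0r E'.
have [s1 [small_s1 E1]] := spanned_mon_small (r - sigma A) j.
exists ([seq (c * q.1, (A, q.2)) | q <- s1] ++ s'); split.
  move=> p; rewrite mem_cat => /orP[/mapP[q qs ->]|/Ps'] //=.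
  by apply/basis_indexP => //; exact: small_s1.
move=> M; rewrite big_cons big_cat big_map /= E' (Ajr_lin E1) mulr_sumr.
by congr (_ + _); apply: eq_bigr => q _; rewrite mulrA.
Qed.

(* Evaluating at the matrices A0 + diag l isolates the terms with A = A0. *)
Lemma Ajr_free r (s : seq (Qv * (mat * seqZ))) : uniq (map snd s) ->
  (forall p, p \in s -> basis_index r p.2) ->
  (forall M, \sum_(p <- s) p.1 * Ajr p.2.1 p.2.2 r M = 0) ->
  forall p, p \in s -> p.1 = 0.
Proof.
move=> uniq_s Ps rel_s [c0 [A0 j0]] p0s /=.
have le_A0r := basis_index_le (Ps _ p0s); have [hA0 _ _] := Ps _ p0s.
pose s0 := [seq (p.1, p.2.2) | p <- s & p.2.1 == A0].
apply: (@monomials_free (r - sigma A0) s0 _ _ _ (c0, j0)).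
- have -> : [seq q.2 | q <- s0] = [seq ab.2 | ab <- [seq ab <- map snd s | ab.1 == A0]].
    by rewrite /s0 filter_map -!map_comp.
  rewrite map_inj_in_uniq ?filter_uniq //.
  by move=> [a b] [c d]; rewrite !mem_filter /= => /andP[/eqP -> _] /andP[/eqP -> _] ->.
- move=> q /mapP[[c [A j]]]; rewrite mem_filter => /andP[/eqP /= eq_AA0 ps] -> /=.
  by apply/(basis_indexP j hA0 le_A0r); rewrite -eq_AA0; exact: Ps _ ps.
- move=> l sl; rewrite -[RHS](rel_s (matD A0 (diag l))).
  rewrite big_map big_filter big_mkcond /=; apply: eq_big_seq => p ps.
  have [hA _ _] := Ps p ps.
  by rewrite Ajr_matD_diag //; case: ifP => _; rewrite ?mulr0.
- by apply/mapP; exists (c0, (A0, j0)); rewrite // mem_filter eqxx p0s.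
Qed.

Theorem proposition6p8 (r : nat) :
  is_basis_of
    (fun Aj : mat * seqZ =>
       [/\ Xipm Aj.1, nonneg_seq Aj.2 & sigmaZ Aj.2 + (sigma Aj.1)%:Z <= r%:Z])
    (fun Aj : mat * seqZ => Ajr Aj.1 Aj.2 r)
    (in_V r).
Proof.
split; [exact: Ajr_in_V | exact: Ajr_free | exact: in_V_spanned].
Qed.
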